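(* Let $Y$ be a latent label taking one of two values $y_1, y_2$ in a label space $\mathcal{Y}$, with known class probability $p = P(Y = y_1)$, and let $g:\mathcal{Y}\to\{\pm1\}^d$ be an isometric injective embedding. Let $\lambda^a,\lambda^b,\lambda^c$ be any three labeling functions (random elements of $\mathcal{Y}$) that are conditionally independent given $Y$, and suppose $n$ i.i.d. samples of $(\lambda^a,\lambda^b,\lambda^c)$ are observed ($Y$ is not observed). Assume the signs (i.e. the correct root of the quadratic) can be correctly recovered. Then for any $\delta>0$, with probability at least $1-\delta$, the quadratic triplet method recovers $\alpha_i = P(g(\lambda^a)_i=1\mid Y=y)$, $\beta_i = P(g(\lambda^b)_i=1\mid Y=y)$, $\gamma_i = P(g(\lambda^c)_i=1\mid Y=y)$ up to error $O\big((\ln(2d^2/\delta)/(2n))^{1/4}\big)$, simultaneously for all $i\in[d]$.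
   Context: Quadratic triplet method: for each coordinate $i\in[d]$, form the empirical frequencies $\hat O_{a,b}=\hat P(g(\lambda^a)_i=1,g(\lambda^b)_i=1)$, $\hat O_{a,c}$, $\hat O_{b,c}$ (defined analogously) and $\hat\ell_a=\hat P(g(\lambda^a)_i=1)$, $\hat\ell_b$, $\hat\ell_c$ from the $n$ samples. By conditional independence, the population quantities satisfy, with $y$ one of the two label values and $p'=P(Y=y)$, the system $O_{u,v} = p'\,\alpha^u\alpha^v + (1-p')\,\frac{\ell_u - p'\alpha^u}{1-p'}\cdot\frac{\ell_v-p'\alpha^v}{1-p'}$ for the three pairs $(u,v)\in\{(a,b),(a,c),(b,c)\}$, where $\alpha^a=\alpha_i,\alpha^b=\beta_i,\alpha^c=\gamma_i$ (using $P(g(\lambda^u)_i=1\mid Y\neq y)=(\ell_u-p'\alpha^u)/(1-p')$). The method plugs the empirical quantities into this system, eliminates two unknowns to obtain a single quadratic equation in one unknown, solves it by the quadratic formula (choosing the correct root), and back-substitutes to obtain estimates of $\alpha_i,\beta_i,\gamma_i$. *)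

From HB Require Import structures.
From mathcomp Require Import all_boot all_order all_algebra.
From mathcomp Require Import reals exp.
Set Implicit Arguments. Unset Strict Implicit. Unset Printing Implicit Defensive.
Import Order.TTheory GRing.Theory Num.Theory.
Local Open Scope ring_scope.

Section Defs.
Variables (R : realType) (L : finType).

(* A joint probability mass function J y a b c = P(Y=y, la=a, lb=b, lc=c).  *)
Definition is_pmf4 (J : L -> L -> L -> L -> R) : Prop :=
  (forall y a b c, 0 <= J y a b c) /\
  \sum_y \sum_a \sum_b \sum_c J y a b c = 1.

Definition Pr4 (J : L -> L -> L -> L -> R) (E : L -> L -> L -> L -> bool) : R :=
  \sum_y \sum_a \sum_b \sum_c (if E y a b c then J y a b c else 0).

Definition condPr4 (J : L -> L -> L -> L -> R) (E F : L -> L -> L -> L -> bool) : R :=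
  Pr4 J (fun y a b c => E y a b c && F y a b c) / Pr4 J F.

Definition margY (J : L -> L -> L -> L -> R) (y : L) : R := \sum_a \sum_b \sum_c J y a b c.
Definition margYa (J : L -> L -> L -> L -> R) (y a : L) : R := \sum_b \sum_c J y a b c.
Definition margYb (J : L -> L -> L -> L -> R) (y b : L) : R := \sum_a \sum_c J y a b c.
Definition margYc (J : L -> L -> L -> L -> R) (y c : L) : R := \sum_a \sum_b J y a b c.

(* la, lb, lc conditionally independent given Y:
   P(a,b,c | y) = P(a|y) P(b|y) P(c|y), multiplied out by P(Y=y)^3. *)
Definition cond_indep3 (J : L -> L -> L -> L -> R) : Prop :=
  forall y a b c,
    J y a b c * margY J y ^+ 2 = margYa J y a * margYb J y b * margYc J y c.

Definition obsLaw (J : L -> L -> L -> L -> R) (t : L * L * L) : R := \sum_y J y t.1.1 t.1.2 t.2.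

Definition PrSample (J : L -> L -> L -> L -> R) (n : nat) (E : {ffun 'I_n -> L * L * L} -> bool) : R :=
  \sum_(s : {ffun 'I_n -> L * L * L} | E s) \prod_(k < n) obsLaw J (s k).

(* ---------- embedding into {+-1}^d  (true encodes +1, false encodes -1) --- *)
Definition hamming d (u v : {ffun 'I_d -> bool}) : nat :=
  #|[set i | u i != v i]|.

Definition isometric_embedding d (dist : L -> L -> R)
    (g : L -> {ffun 'I_d -> bool}) : Prop :=
  injective g /\ forall x y, dist x y = (hamming (g x) (g y))%:R.

Definition pa (t : L * L * L) : L := t.1.1.
Definition pb (t : L * L * L) : L := t.1.2.
Definition pc (t : L * L * L) : L := t.2.

Definition lhat d (g : L -> {ffun 'I_d -> bool}) n
    (s : {ffun 'I_n -> L * L * L}) (pu : L * L * L -> L) (i : 'I_d) : R :=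
  (\sum_(k < n) (g (pu (s k)) i)%:R) / n%:R.

Definition Ohat d (g : L -> {ffun 'I_d -> bool}) n
    (s : {ffun 'I_n -> L * L * L}) (pu pv : L * L * L -> L) (i : 'I_d) : R :=
  (\sum_(k < n) (g (pu (s k)) i && g (pv (s k)) i)%:R) / n%:R.

(* Plugging empirical values into
     O_uv = p' x_u x_v + (1-p') (l_u - p' x_u)/(1-p') (l_v - p' x_v)/(1-p')
   gives  (1-p')/p' (O_uv - l_u l_v) = (x_u - l_u)(x_v - l_v) =: K_uv. *)
Definition Khat d (g : L -> {ffun 'I_d -> bool}) n (s : {ffun 'I_n -> L * L * L}) (pu pv : L * L * L -> L) (pp : R) (i : 'I_d) : R :=
  (1 - pp) / pp * (Ohat g s pu pv i - lhat g s pu i * lhat g s pv i).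

(* Eliminating x_b, x_c yields the quadratic in x_a
     x_a^2 - 2 l_a x_a + (l_a^2 - K_ab K_ac / K_bc) = 0,
   solved by the quadratic formula with root choice sgn (= +1 or -1). *)
Definition alpha_hat d (g : L -> {ffun 'I_d -> bool}) n (s : {ffun 'I_n -> L * L * L}) (pp : R) (sgn : 'I_d -> R) (i : 'I_d) : R :=
  let la := lhat g s pa i in
  let ch := Khat g s pa pb pp i * Khat g s pa pc pp i / Khat g s pb pc pp i in
  let qa : R := 1 in
  let qb : R := - (2 * la) in
  let qc : R := la ^+ 2 - ch in
  (- qb + sgn i * Num.sqrt (qb ^+ 2 - 4 * qa * qc)) / (2 * qa).

Definition beta_hat d (g : L -> {ffun 'I_d -> bool}) n (s : {ffun 'I_n -> L * L * L}) (pp : R) (sgn : 'I_d -> R) (i : 'I_d) : R :=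
  lhat g s pb i
  + Khat g s pa pb pp i / (@alpha_hat d g n s pp sgn i - lhat g s pa i).

Definition gamma_hat d (g : L -> {ffun 'I_d -> bool}) n (s : {ffun 'I_n -> L * L * L}) (pp : R) (sgn : 'I_d -> R) (i : 'I_d) : R :=
  lhat g s pc i
  + Khat g s pa pc pp i / (@alpha_hat d g n s pp sgn i - lhat g s pa i).

End Defs.

(* Under conditional independence each observed frequency is a two-component mixture, and for
   every pair of labeling functions the rescaled covariance
     K_uv = (1 - p') / p' * (O_uv - l_u l_v)  equals  (alpha_u - l_u) (alpha_v - l_v).
   Hence alpha_a = l_a + sgn * sqrt (K_ab K_ac / K_bc) and alpha_b = l_b + K_ab / (alpha_a - l_a),
   alpha_c likewise.  Away from the degenerate locus these formulas are Lipschitz in the six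
   statistics except for the square root, which is 1/2-Hoelder, so e-accurate statistics give
   O(sqrt e)-accurate estimates.  A Chernoff bound and a union bound over the 6d statistics make
   them all e-accurate, with e = 8 sqrt (ln (2 d^2 / delta) / (2 n)), outside an event of
   probability delta. *)

From mathcomp Require Import all_boot all_order all_algebra.
From mathcomp Require Import reals sequences exp.
From mathcomp Require Import ring lra.
Import Order.TTheory GRing.Theory Num.Theory.
Local Open Scope ring_scope.

Section RealFacts.
Context {R : realType}.
Implicit Types a b x : R.

Lemma ler_sqrt_dist a b : `|Num.sqrt a - Num.sqrt b| <= Num.sqrt `|a - b|.
Proof.
set u := Num.sqrt a; set v := Num.sqrt b.
have u_ge0 : 0 <= u := sqrtr_ge0 a; have v_ge0 : 0 <= v := sqrtr_ge0 b.
have sq_le : `|u ^+ 2 - v ^+ 2| <= `|a - b|.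
  rewrite /u /v; case: (lerP 0 a) => a0; case: (lerP 0 b) => b0.
  - by rewrite !sqr_sqrtr.
  - by rewrite sqr_sqrtr // (ler0_sqrtr (ltW b0)) expr0n subr0 !ger0_norm //; lra.
  - rewrite (ler0_sqrtr (ltW a0)) sqr_sqrtr // expr0n sub0r normrN.
    by rewrite [`|b|]ger0_norm // ler0_norm; lra.
  - by rewrite (ler0_sqrtr (ltW a0)) (ler0_sqrtr (ltW b0)) expr0n subrr normr0.
have diff_le : (u - v) ^+ 2 <= `|u ^+ 2 - v ^+ 2|.
  rewrite subr_sqr normrM -(real_normK (num_real (u - v))) expr2 ler_wpM2l //.
  rewrite [`|u + v|]ger0_norm ?addr_ge0 // ler_norml; apply/andP; split; lra.
by rewrite -sqrtr_sqr ler_sqrt // (le_trans diff_le sq_le).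
Qed.

Lemma expR_le_quadratic x : `|x| <= 1 / 2 -> expR x <= 1 + x + 2 * x ^+ 2.
Proof.
rewrite ler_norml => /andP[xlo xhi].
have one_sub_gt0 : 0 < 1 - x by lra.
have expR_mul_le : expR x * (1 - x) <= 1.
  have := ler_wpM2l (expR_ge0 x) (expR_ge1Dx (- x)).
  by rewrite expRN mulfV ?gt_eqF ?expR_gt0.
have one_le : 1 <= (1 - x) * (1 + x + 2 * x ^+ 2).
  have : 0 <= x ^+ 2 * (1 - 2 * x) by apply: mulr_ge0; [exact: sqr_ge0 | lra].
  by rewrite expr2; nra.
by rewrite -(ler_pM2r one_sub_gt0) (le_trans expR_mul_le) // mulrC.
Qed.

End RealFacts.

Record rate (R : realType) := Rate {
  rate_fun :> R -> R;
  rate_ge0 : forall e, 0 < e -> 0 <= rate_fun e;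
  rate_small : forall m, 0 < m ->
    exists2 e1, 0 < e1 & forall e, 0 < e -> e <= e1 -> rate_fun e <= m }.
Arguments rate_ge0 {R} r {e}.
Arguments rate_small {R} r {m}.

(* [close e v] reads "the data [v] is [e]-accurate"; [approx close r f x] says that [f v] is
   within [O (r e)] of [x] for every [e]-accurate [v], once [e] is small enough. *)
Definition eventually_close {R : realType} {V : Type} (close : R -> V -> Prop)
    (P : R -> V -> Prop) : Prop :=
  exists2 e0, 0 < e0 & forall e v, 0 < e -> e <= e0 -> close e v -> P e v.

Definition rate_bounded {R : realType} {V : Type} (close : R -> V -> Prop) (r : rate R)
    (err : V -> R) : Prop :=
  exists2 K, 0 < K & eventually_close close (fun e v => err v <= K * r e).

Definition approx {R : realType} {V : Type} (close : R -> V -> Prop) (r : rate R)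
    (f : V -> R) (x : R) : Prop :=
  rate_bounded close r (fun v => `|f v - x|).

Section Rate.
Context {R : realType} {V : Type} {close : R -> V -> Prop}.
Local Notation eventually_close := (eventually_close close).

Lemma eventually_closeT {P : R -> V -> Prop} : (forall e v, P e v) -> eventually_close P.
Proof. by move=> PT; exists 1 => // e v *; apply: PT. Qed.

Lemma eventually_close_le {c} : 0 < c -> eventually_close (fun e _ => e <= c).
Proof. by move=> c_gt0; exists c. Qed.

Lemma eventually_close_and {P Q : R -> V -> Prop} :
  eventually_close P -> eventually_close Q -> eventually_close (fun e v => P e v /\ Q e v).
Proof.
move=> [e1 e1_gt0 P1] [e2 e2_gt0 Q2]; exists (Num.min e1 e2); first by rewrite lt_min e1_gt0.
by move=> e v e_gt0; rewrite le_min => /andP[le1 le2] cl; split; [apply: P1 | apply: Q2].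
Qed.

Lemma eventually_close_mono {P Q : R -> V -> Prop} :
  eventually_close P -> (forall e v, 0 < e -> P e v -> Q e v) -> eventually_close Q.
Proof. by move=> [e0 e0_gt0 P0] PQ; exists e0 => // e v e_gt0 *; apply/PQ/P0. Qed.

Context {r : rate R}.
Local Notation rate_bounded := (rate_bounded close r).
Local Notation approx := (approx close r).

Lemma rate_bounded_le_eventually {err1 err2 : V -> R} :
  eventually_close (fun _ v => err1 v <= err2 v) -> rate_bounded err2 -> rate_bounded err1.
Proof.
move=> le12 [K K_gt0 bnd2]; exists K => //.
apply: (eventually_close_mono (eventually_close_and le12 bnd2)) => e v _ [].
exact: le_trans.
Qed.

Lemma rate_bounded_le {err1 err2 : V -> R} :
  (forall v, err1 v <= err2 v) -> rate_bounded err2 -> rate_bounded err1.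
Proof. by move=> le12; apply/rate_bounded_le_eventually/eventually_closeT. Qed.

Lemma rate_boundedD {err1 err2 : V -> R} :
  rate_bounded err1 -> rate_bounded err2 -> rate_bounded (fun v => err1 v + err2 v).
Proof.
move=> [K1 K1_gt0 bnd1] [K2 K2_gt0 bnd2]; exists (K1 + K2); first exact: addr_gt0.
apply: (eventually_close_mono (eventually_close_and bnd1 bnd2)) => e v _ [le1 le2].
by rewrite mulrDl lerD.
Qed.

Lemma eventually_close_rate_le {m} : 0 < m -> eventually_close (fun e _ => r e <= m).
Proof.
by move=> /(rate_small r)[e1 e1_gt0 small]; exists e1 => // e v e_gt0 le1 _; apply: small.
Qed.

Lemma rate_bounded0 : rate_bounded (fun _ => 0).
Proof. by exists 1 => //; exists 1 => // e v e_gt0 _ _; rewrite mul1r rate_ge0. Qed.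

Lemma rate_boundedZ {c} {err : V -> R} :
  0 <= c -> rate_bounded err -> rate_bounded (fun v => c * err v).
Proof.
move=> c_ge0 [K K_gt0 [e0 e0_gt0 bnd]]; exists ((c + 1) * K).
  by rewrite mulr_gt0 // ltr_wpDl.
exists e0 => // e v e_gt0 le0 cl; have Kr_ge0 := mulr_ge0 (ltW K_gt0) (rate_ge0 r e_gt0).
rewrite -mulrA mulrDl mul1r (le_trans (ler_wpM2l c_ge0 (bnd e v e_gt0 le0 cl))) //.
by rewrite lerDl.
Qed.

Lemma rate_boundedM {err1 err2 : V -> R} :
  (forall v, 0 <= err1 v) -> (forall v, 0 <= err2 v) ->
  rate_bounded err1 -> rate_bounded err2 -> rate_bounded (fun v => err1 v * err2 v).
Proof.
move=> err1_ge0 err2_ge0 [K1 K1_gt0 bnd1] [K2 K2_gt0 bnd2].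
exists (K1 * K2); first exact: mulr_gt0.
have bnds := eventually_close_and (eventually_close_rate_le ltr01)
  (eventually_close_and bnd1 bnd2).
apply: (eventually_close_mono bnds) => e v e_gt0 [r_le1 [le1 le2]].
apply: (le_trans (ler_pM (err1_ge0 v) (err2_ge0 v) le1 le2)).
rewrite mulrACA ler_wpM2l ?(mulr_ge0 (ltW K1_gt0) (ltW K2_gt0)) //.
by rewrite -[X in _ <= X]mulr1 ler_wpM2l ?rate_ge0.
Qed.

Lemma rate_bounded_sum {I : finType} {err : I -> V -> R} :
  (forall i, rate_bounded (err i)) -> rate_bounded (fun v => \sum_i err i v).
Proof.
move=> bnd; elim: (index_enum I) => [|i s IH].
  by apply: rate_bounded_le rate_bounded0 => v; rewrite big_nil.
by apply: rate_bounded_le (rate_boundedD (bnd i) IH) => v; rewrite big_cons.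
Qed.

Lemma approx_eq {f g : V -> R} {x} : f =1 g -> approx f x -> approx g x.
Proof. by move=> fg; apply: rate_bounded_le => v; rewrite fg. Qed.

Lemma approx_cst c : approx (fun _ => c) c.
Proof. by apply: rate_bounded_le rate_bounded0 => v; rewrite subrr normr0. Qed.

Lemma approxD {f g : V -> R} {x y} :
  approx f x -> approx g y -> approx (fun v => f v + g v) (x + y).
Proof.
move=> fx gy; apply: rate_bounded_le (rate_boundedD fx gy) => v.
by rewrite opprD addrACA ler_normD.
Qed.

Lemma approxN {f : V -> R} {x} : approx f x -> approx (fun v => - f v) (- x).
Proof. by apply: rate_bounded_le => v; rewrite -opprD normrN. Qed.

Lemma approxM {f g : V -> R} {x y} :
  approx f x -> approx g y -> approx (fun v => f v * g v) (x * y).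
Proof.
move=> fx gy.
have bnd := rate_boundedD (rate_boundedD (rate_boundedM (fun _ => normr_ge0 _)
  (fun _ => normr_ge0 _) fx gy) (rate_boundedZ (normr_ge0 y) fx))
  (rate_boundedZ (normr_ge0 x) gy).
apply: rate_bounded_le bnd => v.
have -> : f v * g v - x * y = (f v - x) * (g v - y) + y * (f v - x) + x * (g v - y) by ring.
by rewrite -!normrM (le_trans (ler_normD _ _)) ?lerD ?ler_normD.
Qed.

Lemma approx_away {f : V -> R} {x} :
  x != 0 -> approx f x -> eventually_close (fun _ v => `|x| / 2 <= `|f v|).
Proof.
move=> x_neq0 [K K_gt0 bnd]; have x_gt0 : 0 < `|x| by rewrite normr_gt0.
have small := eventually_close_rate_le (divr_gt0 x_gt0 (mulr_gt0 (@ltr0n R 2) K_gt0)).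
apply: (eventually_close_mono (eventually_close_and small bnd)) => e v _ [r_le f_near].
have Kr_le : K * r e <= `|x| / 2.
  have -> : `|x| / 2 = K * (`|x| / (2 * K)) by field; rewrite gt_eqF.
  by rewrite ler_pM2l.
have := ler_normD (f v) (x - f v); rewrite addrC subrK distrC; lra.
Qed.

Lemma approxV {f : V -> R} {x} : x != 0 -> approx f x -> approx (fun v => (f v)^-1) x^-1.
Proof.
move=> x_neq0 fx; have x_gt0 : 0 < `|x| by rewrite normr_gt0.
have c_ge0 : 0 <= 2 / `|x| ^+ 2 by rewrite divr_ge0 ?exprn_ge0 ?ltW.
apply: (rate_bounded_le_eventually _ (rate_boundedZ c_ge0 fx)).
apply: (eventually_close_mono (approx_away x_neq0 fx)) => e v _ f_away.
have f_gt0 : 0 < `|f v| by apply: lt_le_trans f_away; rewrite divr_gt0.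
have f_neq0 : f v != 0 by rewrite -normr_gt0.
have -> : (f v)^-1 - x^-1 = (x - f v) / (f v * x) by field; rewrite f_neq0 x_neq0.
rewrite normrM normfV normrM distrC mulrC; apply: ler_wpM2r; first exact: normr_ge0.
have -> : 2 / `|x| ^+ 2 = (`|x| / 2 * `|x|)^-1 by field; rewrite gt_eqF.
by rewrite lef_pV2 ?posrE ?mulr_gt0 ?divr_gt0 //; nra.
Qed.

End Rate.

Section ConcreteRates.
Context {R : realType}.

Definition id_rate : rate R :=
  @Rate R id (fun _ => @ltW _ _ 0 _)
    (fun m m_gt0 => ex_intro2 _ _ m m_gt0 (fun _ _ le_m => le_m)).

Lemma sqrt_rate_small (m : R) : 0 < m ->
  exists2 e1, 0 < e1 & forall e, 0 < e -> e <= e1 -> Num.sqrt e <= m.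
Proof.
move=> m_gt0; exists (m ^+ 2) => [|e _ le_m2]; first exact: exprn_gt0.
by rewrite -(ger0_norm (ltW m_gt0)) -sqrtr_sqr ler_sqrt // sqr_ge0.
Qed.

Definition sqrt_rate : rate R := @Rate R Num.sqrt (fun e _ => sqrtr_ge0 e) sqrt_rate_small.

Context {V : Type} {close : R -> V -> Prop}.

Lemma approx_id_sqrt {f : V -> R} {x} :
  approx close id_rate f x -> approx close sqrt_rate f x.
Proof.
move=> [K K_gt0 bnd]; exists K => //.
apply: (eventually_close_mono (eventually_close_and (eventually_close_le ltr01) bnd)).
move=> e v e_gt0 [e_le1 err_le] /=; apply: (le_trans err_le); rewrite ler_pM2l //.
rewrite -{1}(sqr_sqrtr (ltW e_gt0)) expr2 -[X in _ <= X]mulr1 ler_wpM2l ?sqrtr_ge0 //.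
by rewrite -sqrtr1 ler_sqrt.
Qed.

Lemma approx_sqrt {f : V -> R} {x} :
  approx close id_rate f x -> approx close sqrt_rate (fun v => Num.sqrt (f v)) (Num.sqrt x).
Proof.
move=> [K K_gt0 bnd]; exists (Num.sqrt K); first by rewrite sqrtr_gt0.
apply: (eventually_close_mono bnd) => e v e_gt0 err_le /=.
apply: (le_trans (ler_sqrt_dist _ _)); rewrite -sqrtrM; last exact: ltW.
by rewrite ler_sqrt // mulr_ge0 // ltW.
Qed.

End ConcreteRates.

Definition scaled_cov {R : realType} (q o lu lv : R) : R := (1 - q) / q * (o - lu * lv).

Definition alpha_est {R : realType} (q sg la lb lc oab oac obc : R) : R :=
  la + sg * Num.sqrt (scaled_cov q oab la lb * scaled_cov q oac la lc / scaled_cov q obc lb lc).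

Definition back_est {R : realType} (q lu ouv la a : R) : R :=
  lu + scaled_cov q ouv la lu / (a - la).

Section TripletEstimator.
Context {R : realType} {V : Type} {close : R -> V -> Prop}.

Lemma approx_scaled_cov (q : R) {O Lu Lv : V -> R} {o lu lv} :
  approx close id_rate O o -> approx close id_rate Lu lu -> approx close id_rate Lv lv ->
  approx close id_rate (fun v => scaled_cov q (O v) (Lu v) (Lv v)) (scaled_cov q o lu lv).
Proof.
by move=> O_ap Lu_ap Lv_ap; apply: approxM (approx_cst _) (approxD O_ap (approxN (approxM _ _))).
Qed.

Lemma alpha_est_approx (q sg : R) {La Lb Lc Oab Oac Obc : V -> R} {la lb lc oab oac obc}
    xa xb xc :
  approx close id_rate La la -> approx close id_rate Lb lb -> approx close id_rate Lc lc ->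
  approx close id_rate Oab oab -> approx close id_rate Oac oac -> approx close id_rate Obc obc ->
  scaled_cov q oab la lb = (xa - la) * (xb - lb) ->
  scaled_cov q oac la lc = (xa - la) * (xc - lc) ->
  scaled_cov q obc lb lc = (xb - lb) * (xc - lc) ->
  xb != lb -> xc != lc -> sg = 1 \/ sg = -1 -> 0 < sg * (xa - la) ->
  approx close sqrt_rate (fun v => alpha_est q sg (La v) (Lb v) (Lc v) (Oab v) (Oac v) (Obc v)) xa.
Proof.
move=> La_ap Lb_ap Lc_ap Oab_ap Oac_ap Obc_ap cov_ab cov_ac cov_bc xb_neq xc_neq sg_unit sg_pos.
have := approx_scaled_cov q Oab_ap La_ap Lb_ap; rewrite cov_ab => Kab.
have := approx_scaled_cov q Oac_ap La_ap Lc_ap; rewrite cov_ac => Kac.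
have := approx_scaled_cov q Obc_ap Lb_ap Lc_ap; rewrite cov_bc => Kbc.
have Kbc_neq0 : (xb - lb) * (xc - lc) != 0 by rewrite mulf_neq0 ?subr_eq0.
have := approx_sqrt (approxM (approxM Kab Kac) (approxV Kbc_neq0 Kbc)).
have -> : (xa - la) * (xb - lb) * ((xa - la) * (xc - lc)) / ((xb - lb) * (xc - lc)) =
    (xa - la) ^+ 2.
  by field; rewrite !subr_eq0 xb_neq xc_neq.
rewrite sqrtr_sqr => root.
have sg_norm : sg * `|xa - la| = xa - la.
  case: sg_unit sg_pos => ->; rewrite ?mul1r ?mulN1r => pos; first by rewrite gtr0_norm.
  by rewrite ltr0_norm ?opprK // -oppr_gt0.
have -> : xa = la + sg * `|xa - la| by rewrite sg_norm addrC subrK.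
exact: approxD (approx_id_sqrt La_ap) (approxM (approx_cst _) root).
Qed.

Lemma back_est_approx (q : R) {La Lu Ouv A : V -> R} {la lu ouv} xa xu :
  approx close id_rate La la -> approx close id_rate Lu lu -> approx close id_rate Ouv ouv ->
  approx close sqrt_rate A xa ->
  scaled_cov q ouv la lu = (xa - la) * (xu - lu) -> xa != la ->
  approx close sqrt_rate (fun v => back_est q (Lu v) (Ouv v) (La v) (A v)) xu.
Proof.
move=> La_ap Lu_ap Ouv_ap A_ap cov xa_neq.
have := approx_scaled_cov q Ouv_ap La_ap Lu_ap; rewrite cov => K.
have D := approxD A_ap (approxN (approx_id_sqrt La_ap)).
have := approxD (approx_id_sqrt Lu_ap) (approxM (approx_id_sqrt K) (approxV _ D)).
have -> : lu + (xa - la) * (xu - lu) / (xa - la) = xu by field; rewrite subr_eq0.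
by apply; rewrite subr_eq0.
Qed.

End TripletEstimator.

Section IidSampling.
Context {R : realType} {T : finType}.
Implicit Types h : T -> bool.

Definition Pr_iid (w : T -> R) n (E : {ffun 'I_n -> T} -> bool) : R :=
  \sum_(s : {ffun 'I_n -> T} | E s) \prod_(k < n) w (s k).

Definition prob (w : T -> R) (h : T -> bool) : R := \sum_t w t * (h t)%:R.

Definition freq {n} (s : {ffun 'I_n -> T}) (h : T -> bool) : R :=
  (\sum_(k < n) (h (s k))%:R) / n%:R.

Lemma big_ffun_prod n (F : T -> R) :
  \sum_(s : {ffun 'I_n -> T}) \prod_(k < n) F (s k) = (\sum_t F t) ^+ n.
Proof. by rewrite -(bigA_distr_bigA (fun _ : 'I_n => F)) prodr_const card_ord. Qed.

Lemma freq_predC n (s : {ffun 'I_n -> T}) h :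
  (0 < n)%N -> freq s (fun t => ~~ h t) = 1 - freq s h.
Proof.
move=> n_gt0; rewrite /freq (eq_bigr (fun k => 1 - (h (s k))%:R)); last first.
  by move=> k _; case: (h (s k)); rewrite ?subrr ?subr0.
by rewrite sumrB sumr_const card_ord; field; rewrite pnatr_eq0 -lt0n.
Qed.

Context {w : T -> R}.
Hypothesis w_ge0 : forall t, 0 <= w t.

Lemma Pr_iid_ge0 n E : 0 <= Pr_iid w n E.
Proof. by apply: sumr_ge0 => s _; apply: prodr_ge0. Qed.

Lemma Pr_iid_le {n} {E F : {ffun 'I_n -> T} -> bool} :
  (forall s, E s -> F s) -> Pr_iid w n E <= Pr_iid w n F.
Proof.
move=> EF; rewrite /Pr_iid [X in _ <= X]big_mkcond [X in X <= _]big_mkcond /=.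
apply: ler_sum => s _; case: (boolP (E s)) => [/EF -> // | _].
by case: (F s) => //; apply: prodr_ge0.
Qed.

Lemma Pr_iidU {n} (E F : {ffun 'I_n -> T} -> bool) :
  Pr_iid w n (fun s => E s || F s) <= Pr_iid w n E + Pr_iid w n F.
Proof.
rewrite /Pr_iid !(big_mkcond (fun s => _ || _)) (big_mkcond E) (big_mkcond F) -big_split /=.
apply: ler_sum => s _; have P_ge0 : 0 <= \prod_(k < n) w (s k) by apply: prodr_ge0.
by case: (E s); case: (F s); rewrite /= ?addr0 ?add0r ?lerDl ?lexx.
Qed.

Lemma Pr_iid_exists {n} (I : finType) (B : I -> {ffun 'I_n -> T} -> bool) :
  Pr_iid w n (fun s => [exists i, B i s]) <= \sum_i Pr_iid w n (B i).
Proof.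
rewrite /Pr_iid big_mkcond (eq_bigr _ (fun i _ => big_mkcond _ _)) exchange_big /=.
apply: ler_sum => s _; have P_ge0 : 0 <= \prod_(k < n) w (s k) by apply: prodr_ge0.
have terms_ge0 j : 0 <= (if B j s then \prod_(k < n) w (s k) else 0) by case: (B j s).
case: (boolP [exists i, B i s]) => [/existsP[i Bi] | _]; last exact: sumr_ge0.
by rewrite (bigD1 i) //= Bi lerDl sumr_ge0.
Qed.

Lemma Pr_iid_not_all {n} (X : Type) (xs : seq X) (B : X -> {ffun 'I_n -> T} -> bool) (b : R) :
  (forall x, Pr_iid w n (fun s => ~~ B x s) <= b) ->
  Pr_iid w n (fun s => ~~ all (fun x => B x s) xs) <= (size xs)%:R * b.
Proof.
move=> bnd; elim: xs => [|x xs IH] /=; first by rewrite mul0r /Pr_iid big_pred0.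
apply: le_trans (Pr_iid_le (F := fun s => ~~ B x s || ~~ all (B^~ s) xs) _) _.
  by move=> s; rewrite negb_and.
by rewrite (le_trans (Pr_iidU _ _)) // -addn1 natrD mulrDl mul1r addrC lerD.
Qed.

Lemma prob_ge0 h : 0 <= prob w h.
Proof. by apply: sumr_ge0 => t _; rewrite mulr_ge0 ?ler0n. Qed.

Lemma Pr_iid_freq_gt_chernoff {n} h e {lam : R} : (0 < n)%N -> 0 <= lam ->
  Pr_iid w n (fun s => prob w h + e < freq s h) <=
  (\sum_t w t * expR (lam * ((h t)%:R - prob w h - e))) ^+ n.
Proof.
move=> n_gt0 lam_ge0; rewrite -big_ffun_prod /Pr_iid big_mkcond /=; apply: ler_sum => s _.
have term_ge0 t : 0 <= w t * expR (lam * ((h t)%:R - prob w h - e)).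
  exact: mulr_ge0 (w_ge0 t) (expR_ge0 _).
case: ifP => [above | _]; last exact: prodr_ge0.
rewrite big_split /= -[X in X <= _]mulr1 ler_wpM2l ?prodr_ge0 //.
rewrite -expR_sum (le_trans _ (expR_ge1Dx _)) // lerDl -mulr_sumr mulr_ge0 //.
have : n%:R * (prob w h + e) < \sum_(k < n) (h (s k))%:R.
  by move: above; rewrite /freq ltr_pdivlMr ?ltr0n // mulrC.
rewrite mulr_natl mulrnDl => /ltW.
by rewrite !sumrB !sumr_const card_ord -addrA -opprD subr_ge0.
Qed.

Hypothesis w_sum1 : \sum_t w t = 1.

Lemma Pr_iidC n E : Pr_iid w n E = 1 - Pr_iid w n (fun s => ~~ E s).
Proof.
apply/eqP; rewrite eq_sym subr_eq -(expr1n _ n) -w_sum1 -big_ffun_prod (bigID E) /=.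
by rewrite addrC.
Qed.

Lemma prob_le1 h : prob w h <= 1.
Proof.
rewrite -w_sum1; apply: ler_sum => t _; rewrite -[X in _ <= X]mulr1 ler_wpM2l //.
by case: (h t).
Qed.

Lemma prob_predC h : prob w (fun t => ~~ h t) = 1 - prob w h.
Proof.
rewrite -w_sum1 /prob -sumrB; apply: eq_bigr => t _.
by case: (h t); rewrite /= ?mulr1 ?mulr0 ?subrr ?subr0.
Qed.

Lemma mgf_centered_le h {lam : R} : 0 <= lam <= 1 / 2 ->
  \sum_t w t * expR (lam * ((h t)%:R - prob w h)) <= expR (2 * lam ^+ 2).
Proof.
move=> /andP[lam_ge0 lam_le]; have p_ge0 := prob_ge0 h; have p_le1 := prob_le1 h.
have dev_le t : `|(h t)%:R - prob w h| <= 1.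
  by rewrite ler_norml; case: (h t) => /=; apply/andP; split; lra.
have term_le t : expR (lam * ((h t)%:R - prob w h)) <=
    1 + lam * ((h t)%:R - prob w h) + 2 * lam ^+ 2.
  have dev_lam : `|lam * ((h t)%:R - prob w h)| <= lam.
    by rewrite normrM ger0_norm // -[X in _ <= X]mulr1 ler_wpM2l.
  apply: (le_trans (expR_le_quadratic _ (le_trans dev_lam lam_le))).
  rewrite lerD2l ler_wpM2l // exprMn -[X in _ <= X]mulr1 ler_wpM2l ?sqr_ge0 //.
  by rewrite -(real_normK (num_real _)) expr_le1 ?normr_ge0.
apply: (le_trans (ler_sum _ (fun t _ => ler_wpM2l (w_ge0 t) (term_le t)))).
rewrite (eq_bigr (fun t => (1 + 2 * lam ^+ 2 - lam * prob w h) * w t + lam * (w t * (h t)%:R)));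
  last by move=> t _; ring.
rewrite big_split /= -!mulr_sumr w_sum1 mulr1 subrK.
exact: expR_ge1Dx.
Qed.

Lemma Pr_iid_freq_gt n h e : (0 < n)%N -> 0 <= e <= 1 ->
  Pr_iid w n (fun s => prob w h + e < freq s h) <= expR (- (n%:R * e ^+ 2 / 8)).
Proof.
(* [lam = e / 4] minimises the Chernoff exponent [- lam * e + 2 * lam ^+ 2]. *)
move=> n_gt0 /andP[e_ge0 e_le1]; set lam := e / 4.
have lam_ge0 : 0 <= lam by rewrite divr_ge0.
apply: (le_trans (Pr_iid_freq_gt_chernoff h e n_gt0 lam_ge0)).
have -> : \sum_t w t * expR (lam * ((h t)%:R - prob w h - e)) =
    expR (- (lam * e)) * \sum_t w t * expR (lam * ((h t)%:R - prob w h)).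
  rewrite mulr_sumr; apply: eq_bigr => t _.
  by rewrite mulrCA -expRD; congr (_ * expR _); ring.
have base_le : expR (- (lam * e)) * \sum_t w t * expR (lam * ((h t)%:R - prob w h)) <=
    expR (- (e ^+ 2 / 8)).
  apply: (le_trans (ler_wpM2l (expR_ge0 _) (mgf_centered_le h _))).
    by rewrite lam_ge0 /lam; lra.
  by rewrite -expRD /lam ler_expR; lra.
have mgf_ge0 : 0 <= \sum_t w t * expR (lam * ((h t)%:R - prob w h)).
  by apply: sumr_ge0 => t _; exact: mulr_ge0 (w_ge0 t) (expR_ge0 _).
apply: (le_trans (lerXn2r n _ _ base_le));
  rewrite ?nnegrE ?expR_ge0 ?(mulr_ge0 (expR_ge0 _) mgf_ge0) //.
by rewrite -expRM_natl mulrN mulrA.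
Qed.

Lemma Pr_iid_freq_dev n h e : (0 < n)%N -> 0 <= e <= 1 ->
  Pr_iid w n (fun s => ~~ (`|freq s h - prob w h| <= e)) <= 2 * expR (- (n%:R * e ^+ 2 / 8)).
Proof.
move=> n_gt0 e01; pose hC t := ~~ h t.
apply: (le_trans (Pr_iid_le (F := fun s =>
  (prob w h + e < freq s h) || (prob w hC + e < freq s hC)) _)).
  move=> s; rewrite -ltNge ltr_normr freq_predC // prob_predC.
  by case/orP => ?; apply/orP; [left | right]; lra.
by rewrite (le_trans (Pr_iidU _ _)) // mulr2n mulrDl mul1r lerD ?Pr_iid_freq_gt.
Qed.

End IidSampling.

Lemma scaled_cov_mixture {R : realType} (p xu xv zu zv : R) : p != 0 ->
  scaled_cov p (p * (xu * xv) + (1 - p) * (zu * zv))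
    (p * xu + (1 - p) * zu) (p * xv + (1 - p) * zv) =
  (xu - (p * xu + (1 - p) * zu)) * (xv - (p * xv + (1 - p) * zv)).
Proof. by move=> p_neq0; rewrite /scaled_cov; field. Qed.

Section JointLaw.
Context {R : realType} {L : finType}.
Implicit Types (E : L -> L -> L -> bool) (z : L).

Definition massY (J : L -> L -> L -> L -> R) z E : R :=
  \sum_a \sum_b \sum_c J z a b c * (E a b c)%:R.

Definition condY (J : L -> L -> L -> L -> R) z E : R :=
  condPr4 J (fun _ a b c => E a b c) (fun y' _ _ _ => y' == z).

Context {J : L -> L -> L -> L -> R}.

Lemma Pr4_massY (E4 : L -> L -> L -> L -> bool) : Pr4 J E4 = \sum_z massY J z (E4 z).
Proof.
apply: eq_bigr => z _; do 3![apply: eq_bigr => ? _].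
by case: (E4 _ _ _ _); rewrite ?mulr1 ?mulr0.
Qed.

Lemma Pr4_eqY z E : Pr4 J (fun y' a b c => E a b c && (y' == z)) = massY J z E.
Proof.
rewrite Pr4_massY (bigD1 z) //= big1 ?addr0 => [|z' /negbTE z'_neq].
  by apply: eq_bigr => a _; do 2![apply: eq_bigr => ? _]; rewrite eqxx andbT.
rewrite /massY big1 // => a _; rewrite big1 // => b _; rewrite big1 // => c _.
by rewrite z'_neq andbF mulr0.
Qed.

Lemma margY_massY z : margY J z = massY J z (fun _ _ _ => true).
Proof. by do 3![apply: eq_bigr => ? _]; rewrite mulr1. Qed.

Lemma condYE z E : condY J z E = massY J z E / margY J z.
Proof. by rewrite /condY /condPr4 Pr4_eqY margY_massY -(Pr4_eqY z (fun _ _ _ => true)). Qed.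

Lemma prob_obsLaw (h : L * L * L -> bool) :
  prob (obsLaw J) h = Pr4 J (fun _ a b c => h (a, b, c)).
Proof.
rewrite Pr4_massY /prob (eq_bigr _ (fun t _ => mulr_suml _ _ _ _)) exchange_big /=.
apply: eq_bigr => z _; rewrite /massY (pair_bigA _ (fun a b => \sum_c _)) /=.
by rewrite (pair_bigA _ (fun ab c => _)); apply: eq_bigr => -[[a b] c].
Qed.

Hypothesis J_pmf : is_pmf4 J.

Lemma obsLaw_ge0 t : 0 <= obsLaw J t.
Proof. by apply: sumr_ge0 => z _; exact: J_pmf.1. Qed.

Lemma obsLaw_sum1 : \sum_t obsLaw J t = 1.
Proof.
rewrite -J_pmf.2 /obsLaw exchange_big /=; apply: eq_bigr => z _.
by rewrite (pair_bigA _ (fun a b => \sum_c _)) (pair_bigA _ (fun ab c => _)).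
Qed.

Lemma massY_eq0 z E : margY J z = 0 -> massY J z E = 0.
Proof.
move=> m0; have J_ge0 := J_pmf.1 z.
have Jz0 a b c : J z a b c = 0.
  have Ja0 := psumr_eq0P (fun a _ => sumr_ge0 _ (fun b _ => sumr_ge0 _ (fun c _ => J_ge0 a b c)))
    m0 (i := a) isT.
  have Jab0 := psumr_eq0P (fun b _ => sumr_ge0 _ (fun c _ => J_ge0 a b c)) Ja0 (i := b) isT.
  exact: (psumr_eq0P (fun c _ => J_ge0 a b c) Jab0 (i := c) isT).
rewrite /massY big1 // => a _; rewrite big1 // => b _; rewrite big1 // => c _.
by rewrite Jz0 mul0r.
Qed.

Lemma Pr4_condY E : Pr4 J (fun _ a b c => E a b c) = \sum_z margY J z * condY J z E.
Proof.
rewrite Pr4_massY; apply: eq_bigr => z _; rewrite condYE.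
have [m0 | m_neq0] := eqVneq (margY J z) 0; first by rewrite m0 mul0r massY_eq0.
by rewrite mulrC divfK.
Qed.

Hypothesis J_ci : cond_indep3 J.

Lemma massY_indep z (fa fb fc : L -> bool) :
  massY J z (fun a b c => fa a && fb b && fc c) * margY J z ^+ 2 =
  massY J z (fun a _ _ => fa a) * massY J z (fun _ b _ => fb b) * massY J z (fun _ _ c => fc c).
Proof.
have massYa : massY J z (fun a _ _ => fa a) = \sum_a margYa J z a * (fa a)%:R.
  by apply: eq_bigr => a _; rewrite /margYa !mulr_suml; apply: eq_bigr => b _; rewrite mulr_suml.
have massYb : massY J z (fun _ b _ => fb b) = \sum_b margYb J z b * (fb b)%:R.
  rewrite /massY exchange_big; apply: eq_bigr => b _; rewrite /margYb !mulr_suml.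
  by apply: eq_bigr => a _; rewrite mulr_suml.
have massYc : massY J z (fun _ _ c => fc c) = \sum_c margYc J z c * (fc c)%:R.
  rewrite /massY (eq_bigr _ (fun a _ => exchange_big _ _ _ _ _ _)) exchange_big.
  apply: eq_bigr => c _; rewrite /margYc !mulr_suml.
  by apply: eq_bigr => a _; rewrite mulr_suml.
rewrite massYa massYb massYc /massY [in LHS]mulr_suml 2![in RHS]mulr_suml.
apply: eq_bigr => a _; rewrite mulr_suml -mulrA [in RHS]mulr_suml mulr_sumr.
apply: eq_bigr => b _; rewrite mulr_suml !mulr_sumr.
apply: eq_bigr => c _.
by rewrite mulrAC J_ci; case: (fa a); case: (fb b); case: (fc c); rewrite /=; ring.
Qed.

Lemma condY_indep z (fa fb fc : L -> bool) :
  condY J z (fun a b c => fa a && fb b && fc c) =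
  condY J z (fun a _ _ => fa a) * condY J z (fun _ b _ => fb b) * condY J z (fun _ _ c => fc c).
Proof.
rewrite !condYE; have [m0 | m_neq0] := eqVneq (margY J z) 0; first by rewrite m0 !invr0 !mulr0.
apply: (mulIf (expf_neq0 2 m_neq0)); rewrite mulrAC massY_indep; field.
by rewrite m_neq0.
Qed.

Lemma condY_predT {z} : margY J z != 0 -> condY J z (fun _ _ _ => true) = 1.
Proof. by move=> m_neq0; rewrite condYE -margY_massY divff. Qed.

Lemma eq_condY z E E' : (forall a b c, E a b c = E' a b c) -> condY J z E = condY J z E'.
Proof.
by move=> EE'; rewrite !condYE; congr (_ / _); do 3![apply: eq_bigr => ? _]; rewrite EE'.
Qed.

Lemma condY_indep_ab z (fa fb : L -> bool) : margY J z != 0 ->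
  condY J z (fun a b _ => fa a && fb b) =
  condY J z (fun a _ _ => fa a) * condY J z (fun _ b _ => fb b).
Proof.
move=> m_neq0; rewrite -[RHS]mulr1 -(condY_predT m_neq0).
by rewrite -(condY_indep z fa fb xpredT); apply: eq_condY => a b c; rewrite andbT.
Qed.

Lemma condY_indep_ac z (fa fc : L -> bool) : margY J z != 0 ->
  condY J z (fun a _ c => fa a && fc c) =
  condY J z (fun a _ _ => fa a) * condY J z (fun _ _ c => fc c).
Proof.
move=> m_neq0; rewrite -[condY J z (fun a _ _ => fa a)]mulr1 -(condY_predT m_neq0).
by rewrite -(condY_indep z fa xpredT fc); apply: eq_condY => a b c; rewrite andbT.
Qed.

Lemma condY_indep_bc z (fb fc : L -> bool) : margY J z != 0 ->
  condY J z (fun _ b c => fb b && fc c) =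
  condY J z (fun _ b _ => fb b) * condY J z (fun _ _ c => fc c).
Proof.
move=> m_neq0; rewrite -[condY J z (fun _ b _ => fb b)]mul1r -(condY_predT m_neq0).
by rewrite -(condY_indep z xpredT fb fc).
Qed.

End JointLaw.

Lemma margY_two_point {R : realType} {L : finType} {J : L -> L -> L -> L -> R} {y y' : L} :
  is_pmf4 J -> y != y' -> (forall z, z != y -> z != y' -> margY J z = 0) ->
  margY J y + margY J y' = 1.
Proof.
move=> J_pmf y_neq support; have total : \sum_z margY J z = 1 := J_pmf.2.
rewrite -total (bigD1 y) //= (bigD1 y') 1?eq_sym //= addrA big1 ?addr0 //.
by move=> z /andP[z_neq_y' z_neq_y]; exact: support.
Qed.

Lemma quadratic_root_centered {R : realType} (la ch sg : R) :
  (- - (2 * la) + sg * Num.sqrt ((- (2 * la)) ^+ 2 - 4 * 1 * (la ^+ 2 - ch))) / (2 * 1) =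
  la + sg * Num.sqrt ch.
Proof.
have -> : (- (2 * la)) ^+ 2 - 4 * 1 * (la ^+ 2 - ch) = 2 ^+ 2 * ch by ring.
by rewrite sqrtrM ?exprn_ge0 // sqrtr_sqr ger0_norm //; field.
Qed.

Lemma alpha_hatE {R : realType} {L : finType} {d n} (g : L -> {ffun 'I_d -> bool})
    (s : {ffun 'I_n -> L * L * L}) (q : R) sgn i :
  alpha_hat g s q sgn i =
  alpha_est q (sgn i) (lhat R g s (@pa L) i) (lhat R g s (@pb L) i) (lhat R g s (@pc L) i)
    (Ohat R g s (@pa L) (@pb L) i) (Ohat R g s (@pa L) (@pc L) i) (Ohat R g s (@pb L) (@pc L) i).
Proof. exact: quadratic_root_centered. Qed.

Lemma sample_size_budget {R : realType} {d n : nat} {delta : R} :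
  (0 < d)%N -> (0 < n)%N -> 0 < delta < 1 ->
  let t := ln (2 * (d ^ 2)%:R / delta) / (2 * n%:R) in
  0 < t /\ (6 * d)%:R * (2 * expR (- (n%:R * (8 * Num.sqrt t) ^+ 2 / 8))) <= delta.
Proof.
move=> d_gt0 n_gt0 /andP[delta_gt0 delta_lt1] t.
set A := 2 * (d ^ 2)%:R / delta.
have d_ge1 : 1 <= (d%:R : R) by rewrite ler1n.
have A_gt1 : 1 < A.
  rewrite /A natrX ltr_pdivlMr // mul1r.
  have : 1 <= (d%:R : R) ^+ 2 by rewrite exprn_ege1.
  lra.
have t_gt0 : 0 < t by rewrite /t divr_gt0 ?ln_gt0 // mulr_gt0 // ltr0n.
split=> //.
(* the deviation [8 * sqrt t] makes the Chernoff tail [exp (- n e^2 / 8)] equal to [A ^- 4] *)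
have -> : n%:R * (8 * Num.sqrt t) ^+ 2 / 8 = 4%:R * ln A.
  by rewrite exprMn sqr_sqrtr ?ltW // /t; field; rewrite pnatr_eq0 -lt0n.
rewrite expRN expRM_natl lnK ?posrE ?(lt_trans ltr01 A_gt1) //.
have -> : (6 * d)%:R * (2 * (A ^+ 4)^-1) = 3 / 4 * (delta ^+ 3 / (d%:R) ^+ 7) * delta.
  by rewrite /A natrM natrX; field; rewrite !gt_eqF // (lt_le_trans ltr01 d_ge1).
rewrite -[X in _ <= X]mul1r ler_wpM2r ?ltW //.
have : delta ^+ 3 / (d%:R) ^+ 7 <= 1.
  rewrite ler_pdivrMr ?exprn_gt0 ?(lt_le_trans ltr01 d_ge1) // mul1r.
  by rewrite (le_trans (exprn_ile1 _ (ltW delta_gt0) (ltW delta_lt1))) // exprn_ege1.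
lra.
Qed.

Lemma sqrt_8M_le {R : realType} (x : R) : Num.sqrt (8 * x) <= 3 * Num.sqrt x.
Proof.
rewrite sqrtrM // ler_wpM2r ?sqrtr_ge0 // -[X in _ <= X](@ger0_norm _ 3) // -sqrtr_sqr.
by rewrite ler_sqrt // expr2; lra.
Qed.

Section TwoClassTriplet.
Context {R : realType} {L : finType} {J : L -> L -> L -> L -> R} {y y' : L}.
Hypotheses (J_pmf : is_pmf4 J) (J_ci : cond_indep3 J) (y_neq : y != y')
  (support : forall z, z != y -> z != y' -> margY J z = 0)
  (pp_gt0 : 0 < margY J y) (pp_lt1 : margY J y < 1).
Local Notation pp := (margY J y).

Lemma margY_other : margY J y' = 1 - pp.
Proof.
by apply/eqP; rewrite eq_sym subr_eq addrC (margY_two_point J_pmf y_neq support).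
Qed.

Let pp_neq0 : pp != 0 := lt0r_neq0 pp_gt0.

Let margY_other_neq0 : margY J y' != 0.
Proof. by rewrite margY_other subr_eq0 eq_sym lt_eqF. Qed.

Lemma Pr4_mixture E :
  Pr4 J (fun _ a b c => E a b c) = pp * condY J y E + (1 - pp) * condY J y' E.
Proof.
rewrite (Pr4_condY J_pmf) (bigD1 y) //= (bigD1 y') 1?eq_sym //= margY_other addrA big1 ?addr0 //.
by move=> z /andP[z_neq_y' z_neq_y]; rewrite support ?mul0r.
Qed.

Lemma scaled_cov_ab (fa fb : L -> bool) :
  scaled_cov pp (Pr4 J (fun _ a b _ => fa a && fb b))
    (Pr4 J (fun _ a _ _ => fa a)) (Pr4 J (fun _ _ b _ => fb b)) =
  (condY J y (fun a _ _ => fa a) - Pr4 J (fun _ a _ _ => fa a)) *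
  (condY J y (fun _ b _ => fb b) - Pr4 J (fun _ _ b _ => fb b)).
Proof.
rewrite !Pr4_mixture (condY_indep_ab J_ci _ _ _ pp_neq0).
by rewrite (condY_indep_ab J_ci _ _ _ margY_other_neq0) scaled_cov_mixture.
Qed.

Lemma scaled_cov_ac (fa fc : L -> bool) :
  scaled_cov pp (Pr4 J (fun _ a _ c => fa a && fc c))
    (Pr4 J (fun _ a _ _ => fa a)) (Pr4 J (fun _ _ _ c => fc c)) =
  (condY J y (fun a _ _ => fa a) - Pr4 J (fun _ a _ _ => fa a)) *
  (condY J y (fun _ _ c => fc c) - Pr4 J (fun _ _ _ c => fc c)).
Proof.
rewrite !Pr4_mixture (condY_indep_ac J_ci _ _ _ pp_neq0).
by rewrite (condY_indep_ac J_ci _ _ _ margY_other_neq0) scaled_cov_mixture.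
Qed.

Lemma scaled_cov_bc (fb fc : L -> bool) :
  scaled_cov pp (Pr4 J (fun _ _ b c => fb b && fc c))
    (Pr4 J (fun _ _ b _ => fb b)) (Pr4 J (fun _ _ _ c => fc c)) =
  (condY J y (fun _ b _ => fb b) - Pr4 J (fun _ _ b _ => fb b)) *
  (condY J y (fun _ _ c => fc c) - Pr4 J (fun _ _ _ c => fc c)).
Proof.
rewrite !Pr4_mixture (condY_indep_bc J_ci _ _ _ pp_neq0).
by rewrite (condY_indep_bc J_ci _ _ _ margY_other_neq0) scaled_cov_mixture.
Qed.

Context {d : nat} {g : L -> {ffun 'I_d -> bool}} {sgn : 'I_d -> R}.
Local Notation alpha i := (condY J y (fun a _ _ => g a i)).
Local Notation beta i := (condY J y (fun _ b _ => g b i)).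
Local Notation gamma i := (condY J y (fun _ _ c => g c i)).
Local Notation ell_a i := (Pr4 J (fun _ a _ _ => g a i)).
Local Notation ell_b i := (Pr4 J (fun _ _ b _ => g b i)).
Local Notation ell_c i := (Pr4 J (fun _ _ _ c => g c i)).
Hypothesis nondeg : forall i, alpha i != ell_a i /\ beta i != ell_b i /\ gamma i != ell_c i.
Hypothesis sign_ok : forall i, (sgn i = 1 \/ sgn i = -1) /\ 0 < sgn i * (alpha i - ell_a i).

(* Samples of all sizes form one type, so that the constants of [triplet_uniform] do not
   depend on the sample size. *)
Definition sample := {n : nat & {ffun 'I_n -> L * L * L}}.

Definition stats (i : 'I_d) : seq (L * L * L -> bool) :=
  [:: fun t => g (pa t) i; fun t => g (pb t) i; fun t => g (pc t) i;
      fun t => g (pa t) i && g (pb t) i; fun t => g (pa t) i && g (pc t) i;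
      fun t => g (pb t) i && g (pc t) i].

Definition stats_close (e : R) {n} (s : {ffun 'I_n -> L * L * L}) : bool :=
  [forall i, all (fun h => `|freq s h - prob (obsLaw J) h| <= e) (stats i)].

Local Notation close := (fun e (v : sample) => stats_close e (projT2 v)).

Lemma stat_approx i k : (k < 6)%N ->
  approx close id_rate (fun v => freq (projT2 v) (nth xpred0 (stats i) k))
    (Pr4 J (fun _ a b c => nth xpred0 (stats i) k (a, b, c))).
Proof.
move=> k_lt6; exists 1 => //; exists 1 => // e v _ _.
by move=> /forallP/(_ i)/(all_nthP xpred0)/(_ k k_lt6); rewrite mul1r -prob_obsLaw.
Qed.

Lemma triplet_approx i :
  [/\ approx close sqrt_rate (fun v => alpha_hat g (projT2 v) pp sgn i) (alpha i),
      approx close sqrt_rate (fun v => beta_hat g (projT2 v) pp sgn i) (beta i) &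
      approx close sqrt_rate (fun v => gamma_hat g (projT2 v) pp sgn i) (gamma i)].
Proof.
have [xa_neq [xb_neq xc_neq]] := nondeg i; have [sg_unit sg_pos] := sign_ok i.
have La : approx close id_rate (fun v => lhat R g (projT2 v) (@pa L) i) (ell_a i) :=
  stat_approx i 0 isT.
have Lb : approx close id_rate (fun v => lhat R g (projT2 v) (@pb L) i) (ell_b i) :=
  stat_approx i 1 isT.
have Lc : approx close id_rate (fun v => lhat R g (projT2 v) (@pc L) i) (ell_c i) :=
  stat_approx i 2 isT.
have Oab : approx close id_rate (fun v => Ohat R g (projT2 v) (@pa L) (@pb L) i)
  (Pr4 J (fun _ a b _ => g a i && g b i)) := stat_approx i 3 isT.
have Oac : approx close id_rate (fun v => Ohat R g (projT2 v) (@pa L) (@pc L) i)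
  (Pr4 J (fun _ a _ c => g a i && g c i)) := stat_approx i 4 isT.
have Obc : approx close id_rate (fun v => Ohat R g (projT2 v) (@pb L) (@pc L) i)
  (Pr4 J (fun _ _ b c => g b i && g c i)) := stat_approx i 5 isT.
have cov_ab := scaled_cov_ab (fun a => g a i) (fun b => g b i).
have cov_ac := scaled_cov_ac (fun a => g a i) (fun c => g c i).
have cov_bc := scaled_cov_bc (fun b => g b i) (fun c => g c i).
have alpha_ap : approx close sqrt_rate (fun v => alpha_hat g (projT2 v) pp sgn i) (alpha i).
  apply: approx_eq (alpha_est_approx pp (sgn i) _ _ _ La Lb Lc Oab Oac Obc cov_ab cov_ac cov_bc
    xb_neq xc_neq sg_unit sg_pos) => v.
  by rewrite alpha_hatE.
split=> //.
  exact (back_est_approx pp _ _ La Lb Oab alpha_ap cov_ab xa_neq).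
exact (back_est_approx pp _ _ La Lc Oac alpha_ap cov_ac xa_neq).
Qed.

Lemma triplet_uniform : exists2 K, 0 < K & eventually_close close (fun e v => forall i,
  [/\ `|alpha_hat g (projT2 v) pp sgn i - alpha i| <= K * Num.sqrt e,
      `|beta_hat g (projT2 v) pp sgn i - beta i| <= K * Num.sqrt e &
      `|gamma_hat g (projT2 v) pp sgn i - gamma i| <= K * Num.sqrt e]).
Proof.
pose err i (v : sample) := `|alpha_hat g (projT2 v) pp sgn i - alpha i| +
  `|beta_hat g (projT2 v) pp sgn i - beta i| + `|gamma_hat g (projT2 v) pp sgn i - gamma i|.
have err_bnd i : rate_bounded close sqrt_rate (err i).
  by have [A B C] := triplet_approx i; apply: rate_boundedD (rate_boundedD A B) C.
have [K K_gt0 bnd] := rate_bounded_sum err_bnd.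
exists K => //; apply: (eventually_close_mono bnd) => e v _ /= sum_le i.
have : err i v <= K * Num.sqrt e.
  apply: le_trans sum_le; rewrite (bigD1 i) //= lerDl sumr_ge0 // => j _.
  by rewrite !addr_ge0.
rewrite /err; move: (normr_ge0 (alpha_hat g (projT2 v) pp sgn i - alpha i)).
move: (normr_ge0 (beta_hat g (projT2 v) pp sgn i - beta i)).
move: (normr_ge0 (gamma_hat g (projT2 v) pp sgn i - gamma i)).
by move=> *; split; lra.
Qed.

Lemma Pr_stats_close n e : (0 < n)%N -> 0 <= e <= 1 ->
  1 - (6 * d)%:R * (2 * expR (- (n%:R * e ^+ 2 / 8))) <=
  Pr_iid (obsLaw J) n (fun s => stats_close e s).
Proof.
move=> n_gt0 e01; have w_ge0 := obsLaw_ge0 J_pmf; have w_sum1 := obsLaw_sum1 J_pmf.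
rewrite (Pr_iidC w_sum1) lerD2l lerN2.
apply: (le_trans (Pr_iid_le w_ge0 (F := fun s => [exists i,
  ~~ all (fun h => `|freq s h - prob (obsLaw J) h| <= e) (stats i)]) _)).
  by move=> s; rewrite negb_forall.
apply: (le_trans (Pr_iid_exists w_ge0 _ _)).
set b := 2 * _; have -> : (6 * d)%:R * b = \sum_(i < d) 6%:R * b.
  by rewrite sumr_const card_ord natrM; ring.
apply: ler_sum => i _.
exact (Pr_iid_not_all w_ge0 _ (stats i) (fun h s => `|freq s h - prob (obsLaw J) h| <= e) _
  (fun h => Pr_iid_freq_dev w_ge0 w_sum1 _ h _ n_gt0 e01)).
Qed.

Lemma triplet_method_bound : exists C t0 : R, 0 < C /\ 0 < t0 /\
  forall (n : nat) (delta : R), (0 < n)%N -> 0 < delta ->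
    let t := ln (2 * (d ^ 2)%:R / delta) / (2 * n%:R) in
    t <= t0 ->
    1 - delta <= Pr_iid (obsLaw J) n (fun s : {ffun 'I_n -> L * L * L} =>
      [forall i : 'I_d,
        (`|alpha_hat g s pp sgn i - alpha i| <= C * Num.sqrt (Num.sqrt t))
        && (`|beta_hat g s pp sgn i - beta i| <= C * Num.sqrt (Num.sqrt t))
        && (`|gamma_hat g s pp sgn i - gamma i| <= C * Num.sqrt (Num.sqrt t))]).
Proof.
have w_ge0 := obsLaw_ge0 J_pmf; have w_sum1 := obsLaw_sum1 J_pmf.
have [K K_gt0 [e0 e0_gt0 bnd]] := triplet_uniform.
pose e1 := Num.min 1 e0; have e1_gt0 : 0 < e1 by rewrite lt_min ltr01.
exists (3 * K), ((e1 / 8) ^+ 2); split; first exact: mulr_gt0.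
split; first by rewrite exprn_gt0 // divr_gt0.
move=> n delta n_gt0 delta_gt0 t t_le.
have [delta_ge1 | delta_lt1] := lerP 1 delta.
  by apply: le_trans (Pr_iid_ge0 w_ge0 _ _); rewrite subr_le0.
have [d0 | d_gt0] := posnP d.
  rewrite (Pr_iidC w_sum1) lerD2l lerN2 /Pr_iid big_pred0 ?ltW // => s.
  apply/negbTE; rewrite negbK; apply/forallP => -[m m_lt].
  by exfalso; rewrite d0 in m_lt.
have [t_gt0 budget] := sample_size_budget d_gt0 n_gt0 (introT andP (conj delta_gt0 delta_lt1)).
have e_gt0 : 0 < 8 * Num.sqrt t by rewrite mulr_gt0 ?sqrtr_gt0.
have e_le : 8 * Num.sqrt t <= e1.
  rewrite mulrC -ler_pdivlMr // -(ger0_norm (divr_ge0 (ltW e1_gt0) (ler0n _ 8))) -sqrtr_sqr.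
  by rewrite ler_sqrt ?sqr_ge0.
move: e_le; rewrite le_min => /andP[e_le1 e_le0].
apply: (le_trans (y := Pr_iid (obsLaw J) n (stats_close (8 * Num.sqrt t)))).
  apply: le_trans _ (Pr_stats_close _ _ n_gt0 (introT andP (conj (ltW e_gt0) e_le1))).
  by rewrite lerD2l lerN2.
apply: (Pr_iid_le w_ge0) => s close_s; apply/forallP => i.
have [err_a err_b err_c] := bnd _ (existT _ n s) e_gt0 e_le0 close_s i.
have K_le : K * Num.sqrt (8 * Num.sqrt t) <= 3 * K * Num.sqrt (Num.sqrt t).
  by rewrite [3 * K]mulrC -mulrA (ler_pM2l K_gt0) sqrt_8M_le.
by rewrite !(le_trans _ K_le).
Qed.

End TwoClassTriplet.

Theorem mainTheorem1
  (R : realType) (L : finType) (d : nat)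
  (dist : L -> L -> R) (g : L -> {ffun 'I_d -> bool})
  (J : L -> L -> L -> L -> R) (y1 y2 : L) (p : R)
  (y : L) (sgn : 'I_d -> R) :
  isometric_embedding dist g ->
  is_pmf4 J ->
  y1 != y2 ->
  (forall y', y' != y1 -> y' != y2 -> margY J y' = 0) ->
  p = margY J y1 -> 0 < p < 1 ->
  cond_indep3 J ->
  (y == y1) || (y == y2) ->
  let pp := margY J y in
  let alpha i := condPr4 J (fun _ a _ _ => g a i) (fun y' _ _ _ => y' == y) in
  let beta i := condPr4 J (fun _ _ b _ => g b i) (fun y' _ _ _ => y' == y) in
  let gamma i := condPr4 J (fun _ _ _ c => g c i) (fun y' _ _ _ => y' == y) in
  let ella i := Pr4 J (fun _ a _ _ => g a i) in
  let ellb i := Pr4 J (fun _ _ b _ => g b i) in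
  let ellc i := Pr4 J (fun _ _ _ c => g c i) in
  (* non-degeneracy: each labeling function carries signal on every coordinate *)
  (forall i, alpha i != ella i /\ beta i != ellb i /\ gamma i != ellc i) ->
  (* sign recovery: the root choice is the correct one *)
  (forall i, (sgn i = 1 \/ sgn i = -1) /\ 0 < sgn i * (alpha i - ella i)) ->
  exists C : R, exists t0 : R, 0 < C /\ 0 < t0 /\
    forall (n : nat) (delta : R), (0 < n)%N -> 0 < delta ->
      let t := ln (2 * (d ^ 2)%:R / delta) / (2 * n%:R) in
      t <= t0 ->
      1 - delta <=
      PrSample J (fun s : {ffun 'I_n -> L * L * L} =>
        [forall i : 'I_d,
          (`|alpha_hat g s pp sgn i - alpha i| <= C * Num.sqrt (Num.sqrt t))
          && (`|beta_hat g s pp sgn i - beta i| <= C * Num.sqrt (Num.sqrt t))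
          && (`|gamma_hat g s pp sgn i - gamma i| <= C * Num.sqrt (Num.sqrt t))]).
Proof.
(* The isometry of [g] plays no role: each coordinate is estimated separately. *)
move=> _ J_pmf y12 support2 p_def /andP[p_gt0 p_lt1] J_ci y_y12.
move=> pp alpha beta gamma ella ellb ellc nondeg sign_ok.
pose y' := if y == y1 then y2 else y1.
have [y_neq support] : y != y' /\ forall z, z != y -> z != y' -> margY J z = 0.
  rewrite /y'; case: eqP y_y12 => [-> _ | _ /= /eqP ->]; first by split.
  by split=> [|z z_y2 z_y1]; [rewrite eq_sym | exact: support2].
have mix := margY_two_point J_pmf y12 support2.
have [pp_gt0 pp_lt1] : 0 < pp /\ pp < 1.
  by rewrite /pp; case: eqP y_y12 => [-> | _ /= /eqP ->]; rewrite -?p_def; lra.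
exact: (triplet_method_bound J_pmf J_ci y_neq support pp_gt0 pp_lt1 nondeg sign_ok).
Qed.
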